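(* There exists a constant $c>0$ such that for every $n$ that is a perfect square there is a set $P$ of $n$ points in the plane such that every Hamiltonian path $\Pi$ of $P$ satisfies $W(\Pi)\ge c\sqrt{n}\cdot W(K_P)$, where $K_P$ is the complete Euclidean graph on $P$. That is, the Wiener index of any Hamiltonian path of $P$ is at least $\Theta(\sqrt{n})$ times the Wiener index of the complete Euclidean graph over $P$.
   Context: For a connected graph $G$ on vertex set $P$ whose edges $(p,q)$ have weight equal to the Euclidean distance $|pq|$, $\delta_G(p,q)$ denotes the weight of a shortest path between $p$ and $q$ in $G$, and the Wiener index is $W(G)=\sum_{\{p,q\}\subseteq P}\delta_G(p,q)$. The complete Euclidean graph $K_P$ has all edges between points of $P$, so $W(K_P)=\sum_{\{p,q\}\subseteq P}|pq|$. A Hamiltonian path of $P$ is a path with straight-line edges visiting every point of $P$ exactly once. *)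

From Stdlib Require Import Reals.
From mathcomp Require Import all_boot all_order all_algebra all_fingroup.
From mathcomp Require Import Rstruct.
Set Implicit Arguments. Unset Strict Implicit. Unset Printing Implicit Defensive.
Import Order.TTheory GRing.Theory Num.Theory.
Local Open Scope ring_scope.

Definition point := (R * R)%type.

Definition dist (p q : point) : R :=
  Num.sqrt ((p.1 - q.1) ^+ 2 + (p.2 - q.2) ^+ 2).

Definition W_complete (n : nat) (pts : 'I_n -> point) : R :=
  \sum_(i < n) \sum_(j < n | (nat_of_ord i < nat_of_ord j)%N) dist (pts i) (pts j).

Definition ham_seq (n : nat) (pts : 'I_n -> point) (s : 'S_n) : seq point :=
  [seq pts (s i) | i <- enum 'I_n].

(* Weight of the subpath of Pi between positions i and j (i <= j):
   this is the shortest-path distance delta_Pi between those two vertices,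
   since in a path graph the unique path between two vertices is the subpath. *)
Definition path_dist (n : nat) (pts : 'I_n -> point) (s : 'S_n) (i j : nat) : R :=
  let ps := ham_seq pts s in
  \sum_(i <= k < j) dist (nth (0, 0) ps k) (nth (0, 0) ps k.+1).

Definition W_ham (n : nat) (pts : 'I_n -> point) (s : 'S_n) : R :=
  \sum_(i < n) \sum_(j < n | (nat_of_ord i < nat_of_ord j)%N) path_dist pts s i j.

From Pilot Require Import Defs.
From Stdlib Require Import Reals.
From mathcomp Require Import all_boot all_order all_algebra all_fingroup.
From mathcomp Require Import Rstruct ring lra.
Set Implicit Arguments. Unset Strict Implicit. Unset Printing Implicit Defensive.
Import Order.TTheory GRing.Theory Num.Theory.
Local Open Scope ring_scope.

(* Take the n = m^2 points of the m x m integer grid. Distinct grid points are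
   at distance at least 1, so in any Hamiltonian path the vertices at positions
   i < j are at path distance at least j - i, and W(Pi) >= sum_{i<j} (j - i)
   = (n+1) n (n-1) / 6. All points lie in a square of side m, so every distance
   is at most 2m and W(K_P) <= m n (n-1). Since m^2 = n, this gives
   W(Pi) >= sqrt n * W(K_P) / 6. *)

Definition pair_sum (n : nat) (F : nat -> nat -> R) : R :=
  \sum_(i < n) \sum_(j < n | (i < j)%N) F i j.

Lemma pair_sum_recr n F : pair_sum n.+1 F = pair_sum n F + \sum_(i < n) F i n.
Proof.
rewrite /pair_sum big_ord_recr /= [X in _ + X]big_pred0 => [|j]; last first.
  by rewrite ltnNge -ltnS ltn_ord.
rewrite addr0 -big_split; apply: eq_bigr => i _ /=.
by rewrite big_mkcond big_ord_recr /= ltn_ord -big_mkcond.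
Qed.

Lemma pair_sum1 n : 2 * pair_sum n (fun _ _ => 1) = n%:R * (n%:R - 1).
Proof.
elim: n => [|n IH]; first by rewrite /pair_sum big_ord0 mulr0 mul0r.
rewrite pair_sum_recr mulrDr IH sumr_const card_ord -mulr_natr -natr1; ring.
Qed.

Lemma sum_ord_natr n : 2 * \sum_(i < n) (i%:R : R) = n%:R * (n%:R - 1).
Proof.
elim: n => [|n IH]; first by rewrite big_ord0 mulr0 mul0r.
rewrite big_ord_recr /= mulrDr IH -natr1; ring.
Qed.

Lemma pair_sum_gap n :
  6 * pair_sum n (fun i j => j%:R - i%:R) = (n%:R + 1) * n%:R * (n%:R - 1).
Proof.
elim: n => [|n IH]; first by rewrite /pair_sum big_ord0; ring.
rewrite pair_sum_recr mulrDr IH sumrB sumr_const card_ord -mulr_natr -natr1.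
have sum_i := sum_ord_natr n.
have -> : \sum_(i < n) (i%:R : R) = n%:R * (n%:R - 1) / 2 by rewrite -sum_i; field.
by field.
Qed.

Section HamiltonianPathLowerBound.

Variables (n : nat) (pts : 'I_n -> point).
Hypothesis dist_ge1 : forall a b, a != b -> 1 <= Defs.dist (pts a) (pts b).

Lemma nth_ham_seq s k (hk : (k < n)%N) :
  nth (0, 0) (ham_seq pts s) k = pts (s (Ordinal hk)).
Proof.
rewrite /ham_seq (nth_map (Ordinal hk)) ?size_enum_ord //.
by rewrite (nth_ord_enum (Ordinal hk) (Ordinal hk)).
Qed.

Lemma path_dist_ge_gap s i j : (i <= j)%N -> (j < n)%N ->
  j%:R - i%:R <= path_dist pts s i j.
Proof.
move=> le_ij lt_jn.
rewrite /path_dist -natrB // -[X in X <= _]mulr1n -sumr_const_nat.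
rewrite big_nat_cond [X in _ <= X]big_nat_cond.
apply: ler_sum => k /andP[/andP[_ lt_kj] _].
have hk : (k < n)%N by apply: ltn_trans lt_kj lt_jn.
have hk1 : (k.+1 < n)%N by apply: leq_ltn_trans lt_kj lt_jn.
rewrite (nth_ham_seq s hk) (nth_ham_seq s hk1); apply: dist_ge1.
by rewrite (inj_eq perm_inj) -val_eqE /= neq_ltn ltnSn.
Qed.

Lemma W_ham_ge s : (n%:R + 1) * n%:R * (n%:R - 1) / 6 <= W_ham pts s.
Proof.
rewrite -pair_sum_gap mulrAC mulfV ?mul1r ?pnatr_eq0 //.
apply: ler_sum => i _; apply: ler_sum => j lt_ij.
by apply: path_dist_ge_gap; [exact: ltnW | exact: ltn_ord].
Qed.

End HamiltonianPathLowerBound.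

Lemma W_complete_le n (pts : 'I_n -> point) (D : R) :
  (forall a b, Defs.dist (pts a) (pts b) <= D) ->
  W_complete pts <= D * (n%:R * (n%:R - 1) / 2).
Proof.
move=> dist_leD.
rewrite -pair_sum1 mulrAC mulfV ?mul1r ?pnatr_eq0 // mulr_sumr.
apply: ler_sum => i _; rewrite mulr_sumr; apply: ler_sum => j _.
by rewrite mulr1.
Qed.

Lemma dist_le_square (M : R) (p q : point) :
  0 <= p.1 <= M -> 0 <= p.2 <= M -> 0 <= q.1 <= M -> 0 <= q.2 <= M ->
  Defs.dist p q <= 2 * M.
Proof.
move=> /andP[? ?] /andP[? ?] /andP[? ?] /andP[? ?].
have M_ge0 : 0 <= 2 * M by lra.
rewrite /Defs.dist -(ger0_norm M_ge0) -sqrtr_sqr; apply: ler_wsqrtr; nra.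
Qed.

Definition grid_point (m k : nat) : point := ((k %% m)%:R, (k %/ m)%:R).

Lemma grid_point_inj m : injective (grid_point m).
Proof.
move=> a b [/eqP + /eqP]; rewrite !eqr_nat => /eqP mod_ab /eqP div_ab.
by rewrite (divn_eq a m) (divn_eq b m) mod_ab div_ab.
Qed.

Lemma sqr_natrB_ge1 (a b : nat) : a != b -> 1 <= ((a%:R : R) - b%:R) ^+ 2.
Proof.
rewrite neq_ltn => /orP[] lt_ab.
- have : (a%:R : R) + 1 <= b%:R by rewrite natr1 ler_nat.
  nra.
- have : (b%:R : R) + 1 <= a%:R by rewrite natr1 ler_nat.
  nra.
Qed.

Lemma dist_grid_point_ge1 m a b : a != b ->
  1 <= Defs.dist (grid_point m a) (grid_point m b).
Proof.
move=> /(contra_neq (@grid_point_inj m a b)).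
rewrite /Defs.dist /= -[X in X <= _]sqrtr1 => ne_ab; apply: ler_wsqrtr.
have [eq_mod|ne_mod] := eqVneq (a %% m)%N (b %% m)%N.
- have ne_div : (a %/ m)%N != (b %/ m)%N.
    by apply: contraNneq ne_ab => eq_div; rewrite /grid_point eq_mod eq_div.
  by apply: (le_trans (sqr_natrB_ge1 ne_div)); rewrite lerDr sqr_ge0.
- by apply: (le_trans (sqr_natrB_ge1 ne_mod)); rewrite lerDl sqr_ge0.
Qed.

Lemma grid_point_in_square m k : (k < m ^ 2)%N ->
  0 <= (grid_point m k).1 <= m%:R /\ 0 <= (grid_point m k).2 <= m%:R.
Proof.
rewrite -mulnn => lt_k; have m_gt0 : (0 < m)%N by case: m lt_k.
rewrite /= !ler0n !ler_nat; split; apply: ltnW.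
- by rewrite ltn_pmod.
- by rewrite ltn_divLR.
Qed.

Lemma dist_grid_point_le m a b : (a < m ^ 2)%N -> (b < m ^ 2)%N ->
  Defs.dist (grid_point m a) (grid_point m b) <= 2 * m%:R.
Proof.
move=> /grid_point_in_square[? ?] /grid_point_in_square[? ?].
exact: dist_le_square.
Qed.

Theorem theorem6 :
  exists c : R, 0 < c /\
    forall n : nat, (exists m : nat, n = (m ^ 2)%N) ->
      exists pts : 'I_n -> point,
        injective pts /\
        forall s : 'S_n,
          c * Num.sqrt (n%:R) * W_complete pts <= W_ham pts s.
Proof.
exists (1 / 6); split; first by lra.
move=> _ [m ->]; set n := (m ^ 2)%N.
exists (fun k : 'I_n => grid_point m k); split.
  by move=> a b /grid_point_inj /val_inj.
move=> s.
have dist_ge1 (a b : 'I_n) : a != b -> 1 <= Defs.dist (grid_point m a) (grid_point m b).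
  by move=> ne_ab; apply: dist_grid_point_ge1; apply: contra_neq ne_ab; exact: val_inj.
have Wh := W_ham_ge dist_ge1 s.
have Wc := W_complete_le (fun a b : 'I_n => dist_grid_point_le (ltn_ord a) (ltn_ord b)).
have n_sqr : (n%:R : R) = m%:R ^+ 2 by rewrite natrX.
have m_ge0 : 0 <= (m%:R : R) := ler0n _ _.
have n_ge0 : 0 <= (n%:R : R) * (n%:R - 1).
  case: (n) => [|k]; first by rewrite mul0r.
  by rewrite -natr1 addrK mulr_ge0 ?addr_ge0 ?ler0n.
rewrite n_sqr sqrtr_sqr ger0_norm //.
apply: le_trans Wh; apply: le_trans (ler_wpM2l _ Wc) _.
  by rewrite mulr_ge0 // divr_ge0.
rewrite n_sqr in n_ge0 *; rewrite -subr_ge0.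
set M := (m%:R : R).
have -> : (M ^+ 2 + 1) * M ^+ 2 * (M ^+ 2 - 1) / 6
          - 1 / 6 * M * (2 * M * (M ^+ 2 * (M ^+ 2 - 1) / 2))
          = M ^+ 2 * (M ^+ 2 - 1) / 6 by field.
by rewrite divr_ge0.
Qed.
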